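(* Let $E,E'$ be finite sets with $|E'|=2$, $F:\mathcal P(E)\to\mathbb R$ twice continuously differentiable, $\alpha[b]\in\mathcal P(E)$ ($b\in E'$), $\pi\in\mathcal P(E')$ with $\pi(b)>0$ for all $b$, and assume the non-degeneracy conditions 1) and 2) (see context), with the set of minimizers $M^*$ satisfying $|M^*|\geq 2$. Then the set $M^{**}:=\{\hat\nu\in M^*: w_{\hat\nu}>0\}$ of visible pure phases has exactly two elements, and $w_{\hat\nu}=\tfrac12$ for both $\hat\nu\in M^{**}$.
   Context: Free energy $\Phi[\pi](\hat\nu)=F(\pi\cdot\hat\nu)+\sum_b\pi(b)S(\hat\nu(b)|\alpha[b])$ on $\mathcal P(E)^{E'}$, $\pi\cdot\hat\nu=\sum_b\pi(b)\hat\nu(b)$, $S(p|q)=\sum_ap(a)\log(p(a)/q(a))$. Non-degeneracy 1): $\Phi[\pi]$ has a finite set of minimizers $M^*$, each with positive definite Hessian. For $\hat\nu\in M^*$, the stability vector $B_{\hat\nu}\in T\mathcal P(E')=\{x\in\mathbb R^{E'}:\sum x=0\}$ is defined by $\langle x,B_{\hat\nu}\rangle=-(dF_{\pi\cdot\hat\nu}(\sum_bx(b)\hat\nu(b))+\sum_bx(b)S(\hat\nu(b)|\alpha[b]))$ for all $x\in T\mathcal P(E')$, where $dF_\nu$ is the differential of $F$ on $T\mathcal P(E)$. Non-degeneracy 2): distinct minimizers have distinct stability vectors. The weight of $\hat\nu\in M^*$ is $w_{\hat\nu}=\mathbb P(G\in R_{\hat\nu})$ with $R_{\hat\nu}=\{x\in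 T\mathcal P(E'):\langle x,B_{\hat\nu}\rangle>\max_{\hat\nu'\in M^*\setminus\{\hat\nu\}}\langle x,B_{\hat\nu'}\rangle\}$, and $G$ a centered Gaussian vector in $T\mathcal P(E')$ with covariance $C_\pi(b,b')=\pi(b)1_{b=b'}-\pi(b)\pi(b')$. (These are the weights appearing in the AW-metastate $\kappa[\eta]=\sum_{\hat\nu}w_{\hat\nu}\delta_{\mu_{\hat\nu}[\eta]}$ of the model with Gibbs measures $\mu_{F,n}[\eta](\omega)\propto e^{-nF(L_n^\omega)}\prod_i\alpha[\eta(i)](\omega(i))$, $\eta$ i.i.d. $\pi$.) *)

From HB Require Import structures.
From mathcomp Require Import all_boot all_order all_algebra.
From mathcomp Require Import all_classical all_reals all_analysis.
Set Implicit Arguments. Unset Strict Implicit. Unset Printing Implicit Defensive.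
Import Order.TTheory GRing.Theory Num.Theory.
Import numFieldNormedType.Exports.
Local Open Scope classical_set_scope.
Local Open Scope ring_scope.

Section Defs.
Context {R : realType}.

Definition inP {E : finType} (p : E -> R) : Prop :=
  (forall a, 0 <= p a) /\ \sum_(a : E) p a = 1.
Definition inTP {E : finType} (x : E -> R) : Prop := \sum_(a : E) x a = 0.

(* relative entropy S(p|q) = sum_a p(a) log(p(a)/q(a)) (real part; it is
   finite exactly when p << q, see [abs_cont]) *)
Definition relent {E : finType} (p q : E -> R) : R :=
  \sum_(a : E) p a * ln (p a / q a).
Definition abs_cont {E : finType} (p q : E -> R) : Prop :=
  forall a, q a = 0 -> p a = 0.

Definition dirD {E : finType} (F : (E -> R) -> R) (u x : E -> R) : R :=
  derive1 (fun t : R => F (fun a => x a + t * u a)) 0.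

(* F twice continuously differentiable (on R^E, with the product = Euclidean
   topology): all first and second directional derivatives exist everywhere
   and F, its first and its second directional derivatives are continuous. *)
Definition C2 {E : finType} (F : (E -> R) -> R) : Prop :=
  continuous (F : {ptws E -> R} -> R) /\
  forall u v : E -> R,
    (forall x, derivable (fun t : R => F (fun a => x a + t * u a)) 0 1) /\
    (forall x, derivable (fun t : R => dirD F u (fun a => x a + t * v a)) 0 1) /\
    continuous (dirD F u : {ptws E -> R} -> R) /\
    continuous (dirD (dirD F u) v : {ptws E -> R} -> R).

Variables (E E' : finType) (F : (E -> R) -> R) (alpha : E' -> E -> R)
  (pi : E' -> R).

Definition mix (nu : E' -> E -> R) : E -> R :=
  fun a => \sum_(b : E') pi b * nu b a.

Definition Phi (nu : E' -> E -> R) : R :=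
  F (mix nu) + \sum_(b : E') pi b * relent (nu b) (alpha b).

(* points of P(E)^E' where Phi is finite *)
Definition dom_Phi (nu : E' -> E -> R) : Prop :=
  (forall b, inP (nu b)) /\ (forall b, abs_cont (nu b) (alpha b)).

(* global minimizers of Phi[pi] on P(E)^E'  (Phi = +oo off dom_Phi) *)
Definition Mstar : set (E' -> E -> R) :=
  [set nu | dom_Phi nu /\ forall nu', dom_Phi nu' -> Phi nu <= Phi nu'].

(* tangent directions to P(E)^E' within the effective domain of Phi *)
Definition tangent_dir (h : E' -> E -> R) : Prop :=
  (forall b, inTP (h b)) /\ (forall b a, alpha b a = 0 -> h b a = 0).

Definition pos_def_hessian (nu : E' -> E -> R) : Prop :=
  forall h : E' -> E -> R, tangent_dir h -> (exists b a, h b a != 0) ->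
    let f := fun t : R => Phi (fun b a => nu b a + t * h b a) in
    (\forall t \near (0 : R), derivable f t 1) /\
    derivable (derive1 f) 0 1 /\ 0 < derive1 (derive1 f) 0.

Definition stability_vector (nu : E' -> E -> R) (beta : E' -> R) : Prop :=
  inTP beta /\
  forall x : E' -> R, inTP x ->
    \sum_(b : E') x b * beta b =
    - (dirD F (fun a => \sum_(b : E') x b * nu b a) (mix nu)
       + \sum_(b : E') x b * relent (nu b) (alpha b)).

Definition Cpi (b b' : E') : R := pi b * (b == b')%:R - pi b * pi b'.
Definition quadC (x : E' -> R) : R :=
  \sum_(b : E') \sum_(b' : E') x b * Cpi b b' * x b'.

Definition region (B : (E' -> E -> R) -> E' -> R) (nu : E' -> E -> R)
  : set (E' -> R) :=
  [set x | inTP x /\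
     forall nu', Mstar nu' -> nu' <> nu ->
       \sum_(b : E') x b * B nu' b < \sum_(b : E') x b * B nu b].

(* G : Omega -> R^E' is a centered Gaussian vector with covariance C_pi:
   each coordinate is measurable and every linear functional <x,G> is
   centered normal with variance x^T C_pi x (a.s. 0 when the variance is 0) *)
Definition gaussian_Cpi {d : measure_display} {Omega : measurableType d}
  (P : probability Omega R) (G : Omega -> E' -> R) : Prop :=
  (forall b, measurable_fun setT (fun w => G w b)) /\
  forall x : E' -> R,
    (0 < quadC x ->
       forall A : set R, measurable A ->
         P [set w | A (\sum_(b : E') x b * G w b)] =
         normal_prob 0 (Num.sqrt (quadC x)) A) /\
    (quadC x = 0 ->
       P [set w | \sum_(b : E') x b * G w b = 0] = 1%E).

Definition weight {d : measure_display} {Omega : measurableType d}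
  (P : probability Omega R) (G : Omega -> E' -> R)
  (B : (E' -> E -> R) -> E' -> R) (nu : E' -> E -> R) : \bar R :=
  P [set w | region B nu (G w)].

Definition Mstarstar {d : measure_display} {Omega : measurableType d}
  (P : probability Omega R) (G : Omega -> E' -> R)
  (B : (E' -> E -> R) -> E' -> R) : set (E' -> E -> R) :=
  [set nu | Mstar nu /\ (0 < weight P G B nu)%E].

End Defs.

(* When |E'| = 2 the tangent space T P(E') is the line spanned by
   e = 1_{b1} - 1_{b2}, so each stability vector is B_nu = c(nu) e and, by
   non-degeneracy 2), nu |-> c(nu) is injective on M*.  Almost surely G lies in
   T P(E') (the variance of <1, G> is 0), hence <G, B_nu> = Y c(nu) with
   Y = G(b1) - G(b2): the region of nu is hit exactly when nu is the minimizer
   with the largest c and Y > 0, or the one with the smallest c and Y < 0.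
   As Y and -Y are both centered normal with variance 4 pi(b1) pi(b2) > 0,
   these two minimizers get weight 1/2 each and all others weight 0. *)

From HB Require Import structures.
From mathcomp Require Import all_boot all_order all_algebra.
From mathcomp Require Import all_classical all_reals all_analysis.
From mathcomp Require Import lra ring.
Set Implicit Arguments. Unset Strict Implicit. Unset Printing Implicit Defensive.
Import Order.TTheory GRing.Theory Num.Theory.
Local Open Scope classical_set_scope.
Local Open Scope ring_scope.

Lemma card2_cover (T : finType) : #|T| = 2%N ->
  exists b1 b2 : T, b1 != b2 /\ forall b, b = b1 \/ b = b2.
Proof.
rewrite -cardsT => /eqP/cards2P[b1 [b2 [b12 T12]]].
exists b1, b2; split=> // b.
have : b \in [set: T]%SET by rewrite !inE.
by rewrite T12 !inE => /orP[]/eqP; [left|right].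
Qed.

Lemma big_cover2 (T : finType) (V : nmodType) (b1 b2 : T) (f : T -> V) :
  b1 != b2 -> (forall b, b = b1 \/ b = b2) ->
  \sum_(b : T) f b = f b1 + f b2.
Proof.
move=> b12 cover; rewrite (bigD1 b1) //= (bigD1 b2) 1?eq_sym //= big1 ?addr0 //.
by move=> b /andP[]; case: (cover b) => ->; rewrite eqxx ?andbF.
Qed.

Lemma finite_set_argmax (R : realType) (T : Type) (M : set T) (c : T -> R) :
  finite_set M -> M !=set0 -> exists2 x, M x & forall y, M y -> c y <= c x.
Proof.
move=> /(finite_image c)/finite_seqP[s cM] [x0 Mx0].
have cM_in y : M y -> c y \in s.
  move=> My; suff : [set c x | x in M] (c y) by rewrite cM.
  by exists y.
case: s cM cM_in (cM_in x0 Mx0) => // r s cM cM_in _.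
have [i _ imax] := @arg_maxP _ _ _ (ord0 : 'I_(size (r :: s))) xpredT
  (fun i : 'I_(size (r :: s)) => (r :: s)`_i) isT.
have : [set c x | x in M] (r :: s)`_i by rewrite cM /= mem_nth.
case=> x Mx cx; exists x => // y /cM_in ys.
have ys' : (index (c y) (r :: s) < size (r :: s))%N by rewrite index_mem.
by rewrite cx -(nth_index 0 ys); exact: (imax (Ordinal ys')).
Qed.

Section StrictWinner.
Variables (R : realType) (T : Type) (M : set T) (c : T -> R) (top bot : T).
Hypothesis c_inj : forall x x', M x -> M x' -> c x = c x' -> x = x'.
Hypotheses (Mtop : M top) (Mbot : M bot) (top_bot : top <> bot).
Hypothesis top_max : forall x, M x -> c x <= c top.
Hypothesis bot_min : forall x, M x -> c bot <= c x.

Lemma strict_winnerP (y : R) (x : T) : M x ->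
  (forall x', M x' -> x' <> x -> y * c x' < y * c x) <->
  (x = top /\ 0 < y) \/ (x = bot /\ y < 0).
Proof.
move=> Mx; have lt_top x' : M x' -> x' <> top -> c x' < c top.
  move=> Mx' ntop; rewrite lt_def top_max // andbT.
  by apply/eqP => /(c_inj Mtop Mx') /esym.
have gt_bot x' : M x' -> x' <> bot -> c bot < c x'.
  move=> Mx' nbot; rewrite lt_def bot_min // andbT.
  by apply/eqP => /(c_inj Mx' Mbot).
split=> [win|[[-> ypos]|[-> yneg]] x' Mx' nx']; last 2 first.
- by rewrite ltr_pM2l // lt_top.
- by rewrite ltr_nM2l // gt_bot.
case: (ltgtP y 0) => [yneg|ypos|y0]; [right|left|exfalso].
- split=> //; apply: contrapT => nbot.
  by have := win _ Mbot (nesym nbot); rewrite ltr_nM2l // ltNge bot_min.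
- split=> //; apply: contrapT => ntop.
  by have := win _ Mtop (nesym ntop); rewrite ltr_pM2l // ltNge top_max.
- have [x' Mx' nx'] : exists2 x', M x' & x' <> x.
    case: (pselect (x = top)) => [->|/nesym ntop]; last by exists top.
    by exists bot => //; apply: nesym.
  by have := win _ Mx' nx'; rewrite y0 !mul0r ltxx.
Qed.

End StrictWinner.

Definition indicator_diff {R : ringType} {T : finType} (b1 b2 : T) : T -> R :=
  fun b => (b == b1)%:R - (b == b2)%:R.

Lemma quadCN (R : realType) (T : finType) (pi x : T -> R) :
  quadC pi (fun b => - x b) = quadC pi x.
Proof.
by apply: eq_bigr => b _; apply: eq_bigr => b' _; rewrite mulrN !mulNr opprK.
Qed.

Lemma quadC_cst1 (R : realType) (T : finType) (pi : T -> R) :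
  \sum_(b : T) pi b = 1 -> quadC pi (fun=> 1) = 0.
Proof.
move=> pi1; rewrite /quadC /Cpi big1 // => b _.
under eq_bigr do rewrite mul1r mulr1.
rewrite sumrB -!big_distrr /= pi1 (bigD1 b) //= eqxx big1 ?addr0 ?subrr //.
by move=> b' /negbTE; rewrite eq_sym => ->.
Qed.

Section TwoPoints.
Variables (R : realType) (T : finType) (b1 b2 : T).
Hypotheses (b12 : b1 != b2) (cover : forall b, b = b1 \/ b = b2).

Let sum2 (f : T -> R) : \sum_(b : T) f b = f b1 + f b2.
Proof. exact: big_cover2. Qed.

Lemma pairing_indicator_diff (x : T -> R) :
  \sum_(b : T) indicator_diff b1 b2 b * x b = x b1 - x b2.
Proof.
rewrite sum2 /indicator_diff !eqxx (negbTE b12) eq_sym (negbTE b12).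
by rewrite subr0 sub0r mul1r mulN1r.
Qed.

Lemma inTP_cover2 (x : T -> R) : inTP x -> x b2 = - x b1.
Proof. by rewrite /inTP sum2 addrC => /eqP; rewrite addr_eq0 => /eqP. Qed.

Lemma pairing_inTP (x beta : T -> R) : inTP beta ->
  \sum_(b : T) x b * beta b = (x b1 - x b2) * beta b1.
Proof. by move/inTP_cover2; rewrite sum2 => ->; ring. Qed.

Lemma quadC_indicator_diff_gt0 (pi : T -> R) : pi b1 + pi b2 = 1 ->
  0 < pi b1 -> 0 < pi b2 -> 0 < quadC pi (indicator_diff b1 b2).
Proof.
move=> pi12 pi1 pi2; rewrite /quadC /Cpi /indicator_diff !sum2 !eqxx.
rewrite (negbTE b12) eq_sym (negbTE b12) /=.
have -> : pi b2 = 1 - pi b1 by rewrite -pi12 addrAC subrr add0r.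
by nra.
Qed.

End TwoPoints.

Section SignOfNormal.
Variables (d : measure_display) (Omega : measurableType d) (R : realType).
Variable P : probability Omega R.

Lemma measurable_ltr (f g : Omega -> R) :
  measurable_fun setT f -> measurable_fun setT g -> measurable [set w | f w < g w].
Proof.
move=> mf mg; rewrite -[X in measurable X]setTI.
by apply: (measurable_realfun.measurable_fun_ltr mf mg).
Qed.

Lemma probability_setI_full (Z S : set Omega) : measurable Z -> measurable S ->
  P Z = 1%E -> P (Z `&` S) = P S.
Proof.
move=> mZ mS PZ; rewrite [RHS](measureDI P mS mZ) [Z `&` S]setIC -[LHS]add0e.
have PCZ : P (~` Z) = 0%E by rewrite probability_setC // PZ subee.
congr (_ + _)%E; apply/esym/eqP; rewrite -measure_le0 -PCZ.
apply: le_measure; rewrite ?inE; [exact: measurableD|exact: measurableC|].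
by move=> w [].
Qed.

Lemma probability_sign_partition (Y : Omega -> R) : measurable_fun setT Y ->
  (P [set w | (0 < Y w)%R] + P [set w | (Y w < 0)%R] + P (Y @^-1` [set 0%R]) = 1)%E.
Proof.
move=> mY; have mpos := measurable_ltr (measurable_cst (0 : R)) mY.
have mneg := measurable_ltr mY (measurable_cst (0 : R)).
have mzero : measurable (Y @^-1` [set 0]).
  by rewrite -[X in measurable X]setTI; exact: mY _ (measurable_set1 0).
have disj_pn : [set w | 0 < Y w] `&` [set w | Y w < 0] = set0.
  by apply/seteqP; split=> w // [/lt_trans/[apply]]; rewrite ltxx.
have disj_0 : ([set w | 0 < Y w] `|` [set w | Y w < 0]) `&` Y @^-1` [set 0] = set0.
  by apply/seteqP; split=> w // [[|] /= + Y0]; rewrite Y0 ltxx.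
rewrite -(probability_setT P) -!measureU //; last exact: measurableU.
congr (P _); apply/seteqP; split=> w //= _.
by case: (ltgtP (Y w) 0); [left; right|left; left|right].
Qed.

Lemma centered_normal_sign (Y : Omega -> R) (s : R) : measurable_fun setT Y ->
  (forall A, measurable A -> P (Y @^-1` A) = normal_prob 0 s A) ->
  (forall A, measurable A -> P ((fun w => - Y w) @^-1` A) = normal_prob 0 s A) ->
  P [set w | 0 < Y w] = (1 / 2)%:E /\ P [set w | Y w < 0] = (1 / 2)%:E.
Proof.
move=> mY lawY lawNY.
have Pneg : P [set w | Y w < 0] = P [set w | 0 < Y w].
  have -> : [set w | Y w < 0] = (fun w => - Y w) @^-1` `]0, +oo[.
    by apply/seteqP; split=> w /=; rewrite in_itv /= andbT oppr_gt0.
  have -> : [set w | 0 < Y w] = Y @^-1` `]0, +oo[.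
    by apply/seteqP; split=> w /=; rewrite in_itv /= andbT.
  by rewrite lawY ?lawNY //; exact: measurable_itv.
have P0 : P (Y @^-1` [set 0]) = 0%E.
  by rewrite lawY /normal_prob ?integral_set1 //; exact: measurable_set1.
have := probability_sign_partition mY; rewrite Pneg P0 adde0.
move: (P [set w | 0 < Y w]) => [r| |] //= /eqP; rewrite -EFinD eqe => /eqP r2.
by have -> : r = 1 / 2 by lra.
Qed.

End SignOfNormal.

Section GaussianPairing.
Variables (R : realType) (E' : finType) (pi : E' -> R).
Variables (d : measure_display) (Omega : measurableType d).
Variables (P : probability Omega R) (G : Omega -> E' -> R).
Hypothesis gaussG : gaussian_Cpi pi P G.

Lemma measurable_pairing (x : E' -> R) :
  measurable_fun setT (fun w => \sum_(b : E') x b * G w b).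
Proof.
apply: measurable_sum => b.
exact: measurable_realfun.measurable_funM (measurable_cst _) (gaussG.1 b).
Qed.

Let inTP_preimage :
  [set w | inTP (G w)] = (fun w => \sum_(b : E') 1 * G w b) @^-1` [set 0].
Proof.
apply/funext => w; rewrite /preimage /=.
by under [X in _ = (X = _)]eq_bigr do rewrite mul1r.
Qed.

Lemma measurable_inTP : measurable [set w | inTP (G w)].
Proof.
rewrite inTP_preimage -[_ @^-1` _]setTI.
by apply: measurable_pairing => //; exact: measurable_set1.
Qed.

Lemma gaussian_inTP_full :
  \sum_(b : E') pi b = 1 -> P [set w | inTP (G w)] = 1%E.
Proof.
by move=> pi1; rewrite inTP_preimage; exact: (gaussG.2 (fun=> 1)).2 (quadC_cst1 pi1).
Qed.

Lemma gaussian_pairing_sign (x : E' -> R) : 0 < quadC pi x ->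
  P [set w | 0 < \sum_(b : E') x b * G w b] = (1 / 2)%:E /\
  P [set w | \sum_(b : E') x b * G w b < 0] = (1 / 2)%:E.
Proof.
move=> qx; apply: centered_normal_sign (measurable_pairing x) _ _ => A mA.
  exact: (gaussG.2 x).1.
have qNx : 0 < quadC pi (fun b => - x b) by rewrite quadCN.
rewrite -quadCN -(gaussG.2 _).1 //; congr (P _); apply/seteqP.
by split=> w; rewrite /preimage /= -sumrN; under eq_bigr do rewrite mulNr.
Qed.

End GaussianPairing.

Section VisiblePhases.
Variables (R : realType) (E E' : finType) (F : (E -> R) -> R).
Variables (alpha : E' -> E -> R) (pi : E' -> R) (B : (E' -> E -> R) -> E' -> R).
Variables (b1 b2 : E').
Hypotheses (b12 : b1 != b2) (cover : forall b, b = b1 \/ b = b2).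

Local Notation M := (Mstar F alpha pi).
Hypothesis B_tangent : forall nu, M nu -> inTP (B nu).
Hypothesis B_inj : forall nu nu', M nu -> M nu' -> nu <> nu' -> B nu <> B nu'.

Lemma stability_coord_inj nu nu' :
  M nu -> M nu' -> B nu b1 = B nu' b1 -> nu = nu'.
Proof.
move=> Mnu Mnu' B1; apply: contrapT => /(B_inj Mnu Mnu'); apply; apply/funext => b.
by case: (cover b) => ->; rewrite ?(inTP_cover2 b12 cover (B_tangent _)) ?B1.
Qed.

Lemma extreme_phases : finite_set M ->
  (exists nu1 nu2, M nu1 /\ M nu2 /\ nu1 <> nu2) ->
  exists top bot, [/\ M top, M bot, top <> bot,
    forall nu, M nu -> B nu b1 <= B top b1 &
    forall nu, M nu -> B bot b1 <= B nu b1].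
Proof.
move=> finM [nu1 [nu2 [M1 [M2 n12]]]].
have M0 : M !=set0 by exists nu1.
have [top Mtop top_max] := finite_set_argmax (fun nu => B nu b1) finM M0.
have [bot Mbot bot_min] := finite_set_argmax (fun nu => - B nu b1) finM M0.
have {}bot_min nu : M nu -> B bot b1 <= B nu b1 by move/bot_min; rewrite lerN2.
exists top, bot; split=> // top_bot; apply: n12.
have Btop nu : M nu -> B nu b1 = B top b1.
  by move=> Mnu; apply: le_anti; rewrite top_max //= top_bot bot_min.
by apply: stability_coord_inj; rewrite ?Btop.
Qed.

Variables (top bot : E' -> E -> R).
Hypotheses (Mtop : M top) (Mbot : M bot) (top_bot : top <> bot).
Hypothesis top_max : forall nu, M nu -> B nu b1 <= B top b1.
Hypothesis bot_min : forall nu, M nu -> B bot b1 <= B nu b1.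

Lemma region_extreme (x : E' -> R) nu : M nu ->
  region F alpha pi B nu x <->
  inTP x /\ ((nu = top /\ 0 < x b1 - x b2) \/ (nu = bot /\ x b1 - x b2 < 0)).
Proof.
move=> Mnu.
rewrite -(strict_winnerP stability_coord_inj Mtop Mbot top_bot top_max bot_min _ Mnu).
by split=> -[tx win]; split=> // nu' Mnu' nnu; move: (win _ Mnu' nnu);
  rewrite !(pairing_inTP b12 cover _ (B_tangent _)).
Qed.

Variables (d : measure_display) (Omega : measurableType d).
Variables (P : probability Omega R) (G : Omega -> E' -> R).
Hypotheses (gaussG : gaussian_Cpi pi P G) (pi_sum : \sum_(b : E') pi b = 1).
Hypothesis pi_gt0 : forall b, 0 < pi b.

Let Y w := \sum_(b : E') indicator_diff b1 b2 b * G w b.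

Let sign_half :
  P [set w | 0 < Y w] = (1 / 2)%:E /\ P [set w | Y w < 0] = (1 / 2)%:E.
Proof.
have qpos : 0 < quadC pi (indicator_diff b1 b2).
  by apply: quadC_indicator_diff_gt0 => //; rewrite -(big_cover2 _ b12 cover).
by have := gaussian_pairing_sign gaussG qpos; rewrite /Y.
Qed.

Let full_inTP := gaussian_inTP_full gaussG pi_sum.
Let mY := measurable_pairing gaussG (indicator_diff b1 b2).

Lemma weight_top : weight F alpha pi P G B top = (1 / 2)%:E.
Proof.
have mpos := measurable_ltr (measurable_cst (0 : R)) mY.
rewrite -sign_half.1 -(probability_setI_full (measurable_inTP gaussG) mpos full_inTP).
congr (P _); apply/funext => w; apply/propext.
rewrite /= (pairing_indicator_diff b12 cover).
split=> [/(region_extreme _ Mtop)[tx [[_ pos]|[/top_bot]]] //|[tx pos]].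
by apply/(region_extreme _ Mtop); split=> //; left.
Qed.

Lemma weight_bot : weight F alpha pi P G B bot = (1 / 2)%:E.
Proof.
have mneg := measurable_ltr mY (measurable_cst (0 : R)).
rewrite -sign_half.2 -(probability_setI_full (measurable_inTP gaussG) mneg full_inTP).
congr (P _); apply/funext => w; apply/propext.
rewrite /= (pairing_indicator_diff b12 cover).
split=> [/(region_extreme _ Mbot)[tx [[/esym/top_bot]|[_ neg]]] //|[tx neg]].
by apply/(region_extreme _ Mbot); split=> //; right.
Qed.

Lemma weight_nonextreme nu : M nu -> nu <> top -> nu <> bot ->
  weight F alpha pi P G B nu = 0%E.
Proof.
move=> Mnu ntop nbot; rewrite /weight -(measure0 P); congr (P _).
by apply/seteqP; split=> w // /(region_extreme _ Mnu)[_ [[]|[]]].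
Qed.

Lemma visible_phases_extreme :
  [/\ Mstarstar F alpha pi P G B = [set top; bot],
       weight F alpha pi P G B top = (1 / 2)%:E &
       weight F alpha pi P G B bot = (1 / 2)%:E].
Proof.
split; [|exact: weight_top|exact: weight_bot].
apply/seteqP; split=> nu; last first.
  by case=> ->; split; rewrite ?weight_top ?weight_bot ?lte_fin.
move=> [Mnu wpos]; case: (pselect (nu = top)) => [->|ntop]; first by left.
case: (pselect (nu = bot)) => [->|nbot]; first by right.
by move: wpos; rewrite weight_nonextreme ?ltxx.
Qed.

End VisiblePhases.

Theorem mainTheorem4 (R : realType) (E E' : finType)
  (F : (E -> R) -> R) (alpha : E' -> E -> R) (pi : E' -> R)
  (d : measure_display) (Omega : measurableType d) (P : probability Omega R)
  (G : Omega -> E' -> R) (B : (E' -> E -> R) -> E' -> R) :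
  #|E'| = 2%N ->
  C2 F ->
  (forall b, inP (alpha b)) ->
  inP pi -> (forall b, 0 < pi b) ->
  (* non-degeneracy 1) *)
  finite_set (Mstar F alpha pi) ->
  (forall nu, Mstar F alpha pi nu -> pos_def_hessian F alpha pi nu) ->
  (* B nu is the stability vector of each minimizer nu *)
  (forall nu, Mstar F alpha pi nu -> stability_vector F alpha pi nu (B nu)) ->
  (* non-degeneracy 2) *)
  (forall nu nu', Mstar F alpha pi nu -> Mstar F alpha pi nu' ->
     nu <> nu' -> B nu <> B nu') ->
  (* |M*| >= 2 *)
  (exists nu1 nu2, Mstar F alpha pi nu1 /\ Mstar F alpha pi nu2 /\ nu1 <> nu2) ->
  gaussian_Cpi pi P G ->
  exists nu1 nu2, nu1 <> nu2 /\
    Mstarstar F alpha pi P G B = [set nu1; nu2] /\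
    weight F alpha pi P G B nu1 = (1 / 2)%:E /\
    weight F alpha pi P G B nu2 = (1 / 2)%:E.
Proof.
move=> cardE' _ _ [_ pi_sum] pi_gt0 finM _ stab B_inj twoM gaussG.
have [b1 [b2 [b12 cover]]] := card2_cover cardE'.
have B_tangent nu : Mstar F alpha pi nu -> inTP (B nu) by move/stab => [].
have [top [bot [Mtop Mbot top_bot top_max bot_min]]] :=
  extreme_phases b12 cover B_tangent B_inj finM twoM.
have [visible wtop wbot] := visible_phases_extreme b12 cover B_tangent B_inj
  Mtop Mbot top_bot top_max bot_min gaussG pi_sum pi_gt0.
by exists top, bot.
Qed.
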